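(* Let $X$ be a set and $\{d_r\colon X\times X\to\mathbb{R}_{\ge 0}\cup\{\infty\}\}_{r>0}$ a family of functions satisfying the Self-distance Axiom, Upper semi-continuity and the Weak triangle inequality (as described in the context). Equip $X$ with the topology having as basis the sets $N_r^{\varepsilon}(x)=\{y\in X\mid d_r(x,y)<\varepsilon\}$ for $x\in X$, $r>0$, $\varepsilon>0$. Then for every $x\in X$ and every $r>0$, the function \[ d_r(x,\cdot)\colon X\to\mathbb{R}_{\ge0}\cup\{\infty\},\quad y\mapsto d_r(x,y) \] is upper semi-continuous.
   Context: The axioms, required for all $x,y,z\in X$: (Self-distance Axiom) $d_r(x,x)=0$ for all $r>0$. (Upper semi-continuity) if $r_1\le r_2$ then $d_{r_1}(x,y)\le d_{r_2}(x,y)$; and if $d_r(x,y)<\varepsilon$ then there exists $\delta>0$ with $d_{r+\delta}(x,y)<\varepsilon$. (Weak triangle inequality) for $r_1,r_2,r_3>0$, if $d_{r_1+r_2}(x,y)<r_3$ and $d_{r_1+r_2+r_3}(y,z)<r_2$, then $d_{r_1}(x,z)\le d_{r_1+r_2}(x,y)+d_{r_1+r_2+r_3}(y,z)$. The functions $d_r$ need not be symmetric. Under these axioms the sets $N_r^\varepsilon(x)$ form a basis of a topology on $X$. *)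

From mathcomp Require Import all_boot all_order all_algebra.
From mathcomp Require Import boolp classical_sets reals constructive_ereal ereal.
Set Implicit Arguments. Unset Strict Implicit. Unset Printing Implicit Defensive.
Import Order.TTheory GRing.Theory Num.Theory.
Local Open Scope ring_scope.
Local Open Scope ereal_scope.
Local Open Scope classical_set_scope.

Section Defs.
Variables (R : realType) (X : Type) (d : R -> X -> X -> \bar R).

Definition nonneg_valued : Prop :=
  forall (r : R) (x y : X), (0 < r)%R -> 0 <= d r x y /\ d r x y != -oo.

Definition self_distance_axiom : Prop :=
  forall (x : X) (r : R), (0 < r)%R -> d r x x = 0.

Definition upper_semicontinuity_axiom : Prop :=
  (forall (x y : X) (r1 r2 : R), (0 < r1)%R -> (r1 <= r2)%R ->
      d r1 x y <= d r2 x y) /\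
  (forall (x y : X) (r eps : R), (0 < r)%R -> d r x y < eps%:E ->
      exists delta : R, (0 < delta)%R /\ d (r + delta) x y < eps%:E).

Definition weak_triangle_inequality : Prop :=
  forall (x y z : X) (r1 r2 r3 : R), (0 < r1)%R -> (0 < r2)%R -> (0 < r3)%R ->
    d (r1 + r2) x y < r3%:E -> d (r1 + r2 + r3) y z < r2%:E ->
    d r1 x z <= d (r1 + r2) x y + d (r1 + r2 + r3) y z.

Definition Nball (r eps : R) (x : X) : set X := [set y | d r x y < eps%:E].

(* The topology with basis { N_r^eps(x) | x in X, r > 0, eps > 0 }:
   U is open iff it is a union of basis sets. *)
Definition dopen (U : set X) : Prop :=
  forall y, U y -> exists (x : X) (r eps : R),
    (0 < r)%R /\ (0 < eps)%R /\ Nball r eps x y /\ Nball r eps x `<=` U.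

Definition usc_wrt (f : X -> \bar R) : Prop :=
  forall t : R, dopen [set y | f y < t%:E].
End Defs.

(* Around a point y with d_r(x,y) < t, leave a margin g := t - c where
   d_r(x,y) < c < t.  Upper semi-continuity in r lets us enlarge r to r + s
   with 0 < s <= g while keeping d_{r+s}(x,y) < c.  The weak triangle
   inequality with r1 = r, r2 = s and r3 large then gives
   d_r(x,w) <= d_{r+s}(x,y) + d_{r+s+r3}(y,w) < c + s <= t
   for every w in the basic neighbourhood N_{r+s+r3}^s(y), which contains y
   by the self-distance axiom. *)
From mathcomp Require Import all_boot all_order all_algebra.
From mathcomp Require Import boolp classical_sets reals constructive_ereal ereal.
From mathcomp Require Import lra.
Set Implicit Arguments. Unset Strict Implicit. Unset Printing Implicit Defensive.
Import Order.TTheory GRing.Theory Num.Theory.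
Local Open Scope ring_scope.

Lemma lte_EFin_between {R : realFieldType} (e : \bar R) (t : R) :
  (e < t%:E)%E -> exists2 c : R, (e < c%:E)%E & c < t.
Proof.
case: e => [v | // | _] /=.
- by rewrite lte_fin => vt; exists ((v + t) / 2); rewrite ?lte_fin midf_lt.
- by exists (t - 1); rewrite ?ltNyr //; lra.
Qed.

Section BasicNeighbourhoods.
Local Open Scope ereal_scope.
Local Open Scope classical_set_scope.
Variables (R : realType) (X : Type) (d : R -> X -> X -> \bar R).

Lemma Nball_center (r eps : R) (x : X) :
  self_distance_axiom d -> (0 < r)%R -> (0 < eps)%R -> Nball d r eps x x.
Proof. by move=> sd r0 eps0; rewrite /Nball /= sd // lte_fin. Qed.

Lemma exists_small_shift_lt (x y : X) (r c g : R) :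
  upper_semicontinuity_axiom d -> (0 < r)%R -> (0 < g)%R ->
  d r x y < c%:E ->
  exists s : R, [/\ (0 < s)%R, (s <= g)%R & d (r + s) x y < c%:E].
Proof.
move=> [mono usc] r0 g0 /(usc _ _ _ _ r0) [delta [delta0 hdelta]].
exists (Num.min delta g); split; first by rewrite lt_min delta0.
- by rewrite ge_min lexx orbT.
- apply: le_lt_trans hdelta; apply: mono.
  + by rewrite addr_gt0 // lt_min delta0.
  + by rewrite lerD2l ge_min lexx.
Qed.

Lemma Nball_sub_sublevel (x y : X) (r s r3 c : R) :
  weak_triangle_inequality d -> (0 < r)%R -> (0 < s)%R -> (0 < r3)%R ->
  d (r + s) x y < r3%:E -> d (r + s) x y < c%:E ->
  Nball d (r + s + r3) s y `<=` [set w | d r x w < (c + s)%:E].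
Proof.
move=> wt r0 s0 r30 hr3 hc w hw /=.
apply: le_lt_trans (wt _ _ _ _ _ _ r0 s0 r30 hr3 hw) _.
by rewrite EFinD lteD.
Qed.

End BasicNeighbourhoods.

Theorem corollary2p5 (R : realType) (X : Type) (d : R -> X -> X -> \bar R) :
  nonneg_valued d ->
  self_distance_axiom d ->
  upper_semicontinuity_axiom d ->
  weak_triangle_inequality d ->
  forall (x : X) (r : R), 0 < r -> usc_wrt d (d r x).
Proof.
move=> _ sd usc wt x r r0 t y /= hy.
have [c hyc ct] := lte_EFin_between hy.
have gap : 0 < t - c by rewrite subr_gt0.
have [s [s0 sg hs]] := exists_small_shift_lt usc r0 gap hyc.
have r30 : 0 < Num.max c 1 by rewrite lt_max ltr01 orbT.
have hr3 : (d (r + s)%R x y < (Num.max c 1)%:E)%E.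
  by apply: lt_le_trans hs _; rewrite lee_fin le_max lexx.
have radius0 : 0 < r + s + Num.max c 1 by rewrite !addr_gt0.
exists y, (r + s + Num.max c 1), s; do 2!split=> //.
split; first exact: Nball_center.
apply: subset_trans (Nball_sub_sublevel wt r0 s0 r30 hr3 hs) _ => w /= hw.
by apply: lt_le_trans hw _; rewrite lee_fin -lerBrDl.
Qed.
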